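(* Let $m\ge1$ be an integer and $\varepsilon\ge0$. If $\max_{\ell}|\hat\beta_\ell-\beta_\ell|\le\varepsilon$, then $$\hat{\mathcal R}(m)\le\mathcal R^*(m)+\varepsilon,\qquad \max_{\bar\beta\in\mathcal B^*}|(I-\widehat\Pi_m)^{1/2}\bar\beta|\le\mathcal R^*(m)+2\varepsilon.$$ Moreover, when $m<m^*$, also $\hat{\mathcal R}(m)\ge(\mathcal R^*(m)-\varepsilon)_+$.
   Context: Let $\beta_1,\dots,\beta_L\in\mathbb R^d$ be vectors lying in an $m^*$-dimensional linear subspace of $\mathbb R^d$, and let $\hat\beta_1,\dots,\hat\beta_L\in\mathbb R^d$ be arbitrary vectors. $|\cdot|$ is the Euclidean norm, $I$ the $d\times d$ identity, $A\preceq B$ means $B-A$ is positive semidefinite, $x_+=\max(x,0)$. Let $\mathcal A_m=\{\Pi\in\mathbb R^{d\times d}:\Pi=\Pi^\top,\ 0\preceq\Pi\preceq I,\ \operatorname{tr}\Pi\le m\}$ and let $\widehat\Pi_m$ be a minimizer over $\Pi\in\mathcal A_m$ of $R(\Pi)=\max_\ell\hat\beta_\ell^\top(I-\Pi)\hat\beta_\ell$. Set $\hat{\mathcal R}(m)=\sqrt{R(\widehat\Pi_m)}=\min_{\Pi\in\mathcal A_m}\sqrt{R(\Pi)}$, $\mathcal R^*(m)=\min_{\Pi\in\mathcal A_m}\max_\ell|(I-\Pi)^{1/2}\beta_\ell|$, and $\mathcal B^*=\{\sum_{\ell=1}^Lc_\ell\beta_\ell:\sum_\ell|c_\ell|\le1\}$.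 *)

From HB Require Import structures.
From mathcomp Require Import all_boot all_order all_algebra.
From mathcomp Require Import classical_sets boolp reals.
Set Implicit Arguments. Unset Strict Implicit. Unset Printing Implicit Defensive.
Import Order.TTheory GRing.Theory Num.Theory.
Local Open Scope ring_scope.
Local Open Scope classical_set_scope.

Section Defs.
Variables (R : realType) (d : nat).

Definition vnorm (x : 'cV[R]_d) : R := Num.sqrt (\sum_(i < d) x i 0 ^+ 2).

Definition qform (A : 'M[R]_d) (x : 'cV[R]_d) : R := (x^T *m A *m x) 0 0.

Definition psd (A : 'M[R]_d) : Prop := A^T = A /\ forall x, 0 <= qform A x.

Definition loewner_le (A B : 'M[R]_d) : Prop := psd (B - A).

(* the PSD square root A^{1/2}: the (unique) PSD matrix S with S S = A
   (chosen by classical choice; 0 if A has none, which never happens for PSD A) *)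
Definition msqrt (A : 'M[R]_d) : 'M[R]_d :=
  xget 0 [set S | psd S /\ S *m S = A].

Definition Acal (m : nat) : set 'M[R]_d :=
  [set P | P^T = P /\ loewner_le 0 P /\ loewner_le P 1%:M /\ \tr P <= m%:R].

Definition Rfun (L : nat) (bh : 'I_L -> 'cV[R]_d) (P : 'M[R]_d) : R :=
  \big[Num.max/0]_(l < L) qform (1%:M - P) (bh l).

(* R^*(m) = min over A_m of max_l |(I - Pi)^{1/2} b_l|  (written as an infimum) *)
Definition Rstar (L : nat) (b : 'I_L -> 'cV[R]_d) (m : nat) : R :=
  inf [set (\big[Num.max/0]_(l < L) vnorm (msqrt (1%:M - P) *m b l)) | P in Acal m].

Definition Bstar (L : nat) (b : 'I_L -> 'cV[R]_d) : set 'cV[R]_d :=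
  [set x | exists c : 'I_L -> R,
     \sum_(l < L) `|c l| <= 1 /\ x = \sum_(l < L) c l *: b l].

Definition in_subspace_dim (L : nat) (b : 'I_L -> 'cV[R]_d) (mstar : nat) : Prop :=
  exists U : 'M[R]_(mstar, d), \rank U = mstar /\ forall l, ((b l)^T <= U)%MS.

End Defs.

(* Write nu_P(x) = |(I - P)^{1/2} x|.  For P in A_m, nu_P is a seminorm
   dominated by the Euclidean norm and sqrt R(P) = max_l nu_P(bh_l), so replacing
   the b_l by the bh_l moves max_l nu_P(.) by at most eps, uniformly in P.  This
   gives the upper bound after minimising over P, and the lower bound because
   R*(m) <= max_l nu_Pihat(b_l); the bound on B* holds because a seminorm is
   maximised over the convex hull of the +-b_l at one of them.
   The square root (I - P)^{1/2} exists by the spectral theorem over C: a real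
   polynomial interpolating t |-> t^{1/4} on the nonnegative spectrum of a PSD
   matrix A yields a symmetric T with T^4 = A, and the Gram matrix T^2 is then a
   PSD square root. *)

From HB Require Import structures.
From mathcomp Require Import all_boot all_order all_algebra.
From mathcomp Require Import classical_sets boolp reals.
From mathcomp.real_closed Require Import complex.
From mathcomp Require Import spectral.
From mathcomp Require Import lra ring.
Import Order.TTheory GRing.Theory Num.Theory.
Set Implicit Arguments. Unset Strict Implicit. Unset Printing Implicit Defensive.
Local Open Scope ring_scope.

Lemma interpolating_poly (F : fieldType) (f : F -> F) (s : seq F) :
  exists p : {poly F}, {in s, forall x, p.[x] = f x}.
Proof.
elim: s => [|y s [p Hp]]; first by exists 0.
have [ys|nys] := boolP (y \in s).
  by exists p => x; rewrite inE => /predU1P[->|]; apply: Hp.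
pose w := \prod_(z <- s) ('X - z%:P).
have wy : w.[y] != 0 by rewrite -/(root w y) root_prod_XsubC.
exists (p + ((f y - p.[y]) / w.[y]) *: w) => x; rewrite inE hornerD hornerZ.
case/predU1P => [->|xs]; first by rewrite divfK // addrC subrK.
have /eqP -> : root w x by rewrite root_prod_XsubC.
by rewrite mulr0 addr0 Hp.
Qed.

Lemma trmx_horner_mx (R : comNzRingType) n (A : 'M[R]_n.+1) (p : {poly R}) :
  (horner_mx A p)^T = horner_mx A^T p.
Proof.
elim/poly_ind: p => [|p c IH]; first by rewrite !rmorph0 trmx0.
rewrite !rmorphD !rmorphM /= !horner_mx_X !horner_mx_C -!mulmxE.
rewrite linearD /= tr_scalar_mx trmx_mul IH; congr (_ + _).
by rewrite (comm_horner_mx p (erefl : comm_mx A^T A^T)).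
Qed.

Lemma eigenvalue_spectral_diag (C : numClosedFieldType) n (A : 'M[C]_n) i :
  A \is normalmx -> eigenvalue A (spectral_diag A 0 i).
Proof.
move=> /orthomx_spectralP; set P := spectralmx A => defA.
have Pu : P \in unitmx := spectral_unit A.
apply/eigenvalueP; exists (row i P).
  rewrite {1}defA !mulmxA -row_mul mulmxV // row1 -rowE row_diag_mx.
  by rewrite -scalemxAl -rowE.
apply/negP => /eqP /(congr1 (mulmx^~ (invmx P))).
rewrite mul0mx -row_mul mulmxV // row1 => /rowP /(_ i).
by move=> /eqP; rewrite !mxE !eqxx oner_eq0.
Qed.

Section SelfDot.
Variable R : realDomainType.

Lemma mulmx_tr_selfE n (x : 'cV[R]_n) : (x^T *m x) 0 0 = \sum_i x i 0 ^+ 2.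
Proof. by rewrite mxE; apply: eq_bigr => i _; rewrite mxE expr2. Qed.

Lemma mulmx_tr_self_ge0 n (x : 'cV[R]_n) : 0 <= (x^T *m x) 0 0.
Proof. by rewrite mulmx_tr_selfE sumr_ge0 // => i _; rewrite sqr_ge0. Qed.

Lemma mulmx_tr_self_eq0 n (x : 'cV[R]_n) : ((x^T *m x) 0 0 == 0) = (x == 0).
Proof.
apply/idP/eqP => [|->]; last by rewrite mulmx0 mxE.
rewrite mulmx_tr_selfE psumr_eq0 => [/allP x0|i _]; last exact: sqr_ge0.
apply/matrixP => i j; rewrite ord1 mxE; apply/eqP.
by rewrite -sqrf_eq0 (implyP (x0 i _)) ?mem_index_enum.
Qed.

End SelfDot.

Section PsdSqrt.
Variable R : realType.

Lemma psd_gram n (T : 'M[R]_n) : T^T = T -> psd (T *m T).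
Proof.
move=> Tsym; split; first by rewrite trmx_mul Tsym.
move=> x; rewrite /qform.
have -> : x^T *m (T *m T) *m x = (T *m x)^T *m (T *m x).
  by rewrite trmx_mul Tsym !mulmxA.
exact: mulmx_tr_self_ge0.
Qed.

Lemma psd_eigenvalue_ge0 n (A : 'M[R]_n) a : psd A -> eigenvalue A a -> 0 <= a.
Proof.
move=> [_ Apsd] /eigenvalueP [v vA v0].
have := Apsd v^T; rewrite /qform trmxK vA -scalemxAl mxE.
have vv : 0 < (v^T^T *m v^T) 0 0.
  by rewrite lt_def mulmx_tr_self_eq0 mulmx_tr_self_ge0 trmx_eq0 v0.
by rewrite trmxK in vv; rewrite pmulr_lge0.
Qed.

Lemma symmetric_map_real_complex n (A : 'M[R]_n) :
  A^T = A -> map_mx (real_complex R) A \is symmetricmx.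
Proof.
move=> Asym; apply/is_hermitianmxP; rewrite expr0 scale1r map_mx_id //.
by apply/matrixP => j k; rewrite !mxE -[in RHS]Asym mxE.
Qed.

Lemma real_map_real_complex n (A : 'M[R]_n) :
  map_mx (real_complex R) A \is a realmx.
Proof. by apply/mxOverP => j k; rewrite mxE; apply/complex_realP; exists (A j k). Qed.

Lemma psd_spectral_diag n (A : 'M[R]_n) i : psd A ->
  exists2 x : R, 0 <= x & spectral_diag (map_mx (real_complex R) A) 0 i = x%:C%C.
Proof.
move=> Apsd; have /symmetric_map_real_complex ACsym := proj1 Apsd.
have ACreal := real_map_real_complex A.
have /mxOverP /(_ 0 i) /complex_realP [x dx] :=
  hermitian_spectral_diag_real (realsym_hermsym ACsym ACreal).
exists x => //; apply: psd_eigenvalue_ge0 Apsd _.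
have := eigenvalue_spectral_diag i (symmetric_normalmx ACsym ACreal).
by rewrite dx eigenvalue_map.
Qed.

Lemma psd_spectrum n (A : 'M[R]_n.+1) : psd A ->
  exists2 s : seq R, {in s, forall x, 0 <= x} &
    forall q : {poly R}, {in s, forall x, q.[x] = 0} -> horner_mx A q = 0.
Proof.
move=> Apsd; have /symmetric_map_real_complex ACsym := proj1 Apsd.
have /orthomx_spectralP defAC := symmetric_normalmx ACsym (real_map_real_complex A).
have [g g0 dg] := fin_all_exists2 (fun i => psd_spectral_diag i Apsd).
exists (codom g) => [_ /codomP [i ->] //|q qg].
apply: (map_mx_inj (f := real_complex R)).
rewrite map_mx0 map_horner_mx defAC horner_mx_uconjC ?spectral_unit //.
rewrite horner_mx_diag; set D := map_mx (horner _) _.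
suff -> : D = 0 by rewrite [diag_mx 0]linear0 mulmx0 mul0mx.
apply/rowP => i; rewrite !mxE dg horner_map qg ?rmorph0 //.
exact: codom_f.
Qed.

Lemma psd_sqrt n (A : 'M[R]_n) : psd A -> exists2 S, psd S & S *m S = A.
Proof.
case: n A => [A Apsd|n A Apsd]; first by exists A => //; apply/matrixP => [[]].
have [s s0 sA] := psd_spectrum Apsd.
have [r rs] := interpolating_poly (fun x => Num.sqrt (Num.sqrt x)) s.
pose T := horner_mx A r.
have Tsym : T^T = T by rewrite trmx_horner_mx (proj1 Apsd).
exists (T *m T); first exact: psd_gram.
have /eqP : horner_mx A (r ^+ 4 - 'X) = 0.
  apply: sA => x xs; rewrite !hornerE rs // -[4%N]/(2 * 2)%N exprM.
  by rewrite !sqr_sqrtr ?sqrtr_ge0 ?s0 ?subrr.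
rewrite rmorphB rmorphXn /= horner_mx_X subr_eq0 => /eqP <-.
by rewrite !exprS expr0 mulr1 -!mulmxE !mulmxA.
Qed.

End PsdSqrt.

Lemma lagrange_identity (T : comNzRingType) (I : finType) (u v : I -> T) :
  \sum_i \sum_j (u i * v j - u j * v i) ^+ 2 =
  2%:R * ((\sum_i u i ^+ 2) * (\sum_i v i ^+ 2) - (\sum_i u i * v i) ^+ 2).
Proof.
have E i j : (u i * v j - u j * v i) ^+ 2 =
    (u i ^+ 2 * v j ^+ 2 - u i * v i * (u j * v j))
  + (u j ^+ 2 * v i ^+ 2 - u j * v j * (u i * v i)) by ring.
under eq_bigr do under eq_bigr do rewrite E.
under eq_bigr do rewrite big_split /=.
rewrite big_split /= [X in _ + X]exchange_big /= -mulr2n mulr_natl.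
congr (_ *+ 2); rewrite expr2 !big_distrlr -sumrB.
by apply: eq_bigr => i _; rewrite -sumrB.
Qed.

Lemma cauchy_schwarz (R : rcfType) (I : finType) (u v : I -> R) :
  \sum_i u i * v i <= Num.sqrt (\sum_i u i ^+ 2) * Num.sqrt (\sum_i v i ^+ 2).
Proof.
have sq_ge0 (w : I -> R) : 0 <= \sum_i w i ^+ 2.
  by apply: sumr_ge0 => i _; apply: sqr_ge0.
have : 0 <= \sum_i \sum_j (u i * v j - u j * v i) ^+ 2.
  by apply: sumr_ge0 => i _; apply: sumr_ge0 => j _; apply: sqr_ge0.
rewrite lagrange_identity pmulr_rge0 // subr_ge0 => le_sq.
rewrite -sqrtrM ?sq_ge0 //; apply: le_trans (ler_norm _) _.
by rewrite -sqrtr_sqr ler_wsqrtr.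
Qed.

Lemma bigmax_le_add (R : realDomainType) (I : finType) (F G : I -> R) e :
  0 <= e -> (forall i, F i <= G i + e) ->
  \big[Num.max/0]_i F i <= \big[Num.max/0]_i G i + e.
Proof.
move=> e0 FG; apply: bigmax_le => [|i _].
  by rewrite addr_ge0 // bigmax_ge_id.
by apply: le_trans (FG i) _; rewrite lerD2r le_bigmax.
Qed.

Lemma sqrtr_bigmax (R : rcfType) (I : finType) (F : I -> R) :
  Num.sqrt (\big[Num.max/0]_i F i) = \big[Num.max/0]_i Num.sqrt (F i).
Proof.
apply: (big_ind2 (fun x y => Num.sqrt x = y)) => [|x _ y _ <- <-|//].
  exact: sqrtr0.
have [xy|/ltW yx] := leP x y; first by rewrite max_r // ler_wsqrtr.
by rewrite max_l // ler_wsqrtr.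
Qed.

Section EuclideanNorm.
Variables (R : realType) (d : nat).
Implicit Types (x u v : 'cV[R]_d) (M P S : 'M[R]_d).

Lemma vnorm_ge0 x : 0 <= vnorm x.
Proof. exact: sqrtr_ge0. Qed.

Lemma vnormE x : vnorm x = Num.sqrt ((x^T *m x) 0 0).
Proof. by rewrite mulmx_tr_selfE. Qed.

Lemma sqr_vnorm x : vnorm x ^+ 2 = \sum_i x i 0 ^+ 2.
Proof. by rewrite vnormE sqr_sqrtr ?mulmx_tr_self_ge0 ?mulmx_tr_selfE. Qed.

Lemma vnormZ c x : vnorm (c *: x) = `|c| * vnorm x.
Proof.
rewrite /vnorm -sqrtr_sqr -sqrtrM ?sqr_ge0 // mulr_sumr; congr Num.sqrt.
by apply: eq_bigr => i _; rewrite mxE exprMn.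
Qed.

Lemma vnormB u v : vnorm (u - v) = vnorm (v - u).
Proof. by rewrite -opprB -scaleN1r vnormZ normrN normr1 mul1r. Qed.

Lemma vnormD u v : vnorm (u + v) <= vnorm u + vnorm v.
Proof.
rewrite -(ger0_norm (addr_ge0 (vnorm_ge0 u) (vnorm_ge0 v))) -sqrtr_sqr.
apply: ler_wsqrtr; rewrite sqrrD !sqr_vnorm.
have -> : \sum_i (u + v) i 0 ^+ 2 =
    \sum_i u i 0 ^+ 2 + (\sum_i u i 0 * v i 0) *+ 2 + \sum_i v i 0 ^+ 2.
  rewrite -sumrMnl -!big_split /=; apply: eq_bigr => i _.
  by rewrite mxE sqrrD; ring.
by rewrite lerD2r lerD2l lerMn2r cauchy_schwarz orbT.
Qed.

Lemma vnorm_sum (I : finType) (w : I -> 'cV[R]_d) :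
  vnorm (\sum_i w i) <= \sum_i vnorm (w i).
Proof.
apply: (big_ind2 (fun x y => vnorm x <= y)) => //.
- by rewrite /vnorm big1 ?sqrtr0 // => i _; rewrite mxE expr0n.
- by move=> x1 y1 x2 y2 h1 h2; apply: le_trans (vnormD _ _) (lerD h1 h2).
Qed.

Lemma msqrtP M : psd M -> psd (msqrt M) /\ msqrt M *m msqrt M = M.
Proof.
move=> Mpsd; have [S Spsd SS] := psd_sqrt Mpsd.
exact: (xgetI 0 (P := [set S | psd S /\ S *m S = M]) (conj Spsd SS)).
Qed.

Lemma vnorm_msqrt M x : psd M -> vnorm (msqrt M *m x) = Num.sqrt (qform M x).
Proof.
move=> /msqrtP [[Ssym _] SS]; rewrite vnormE /qform -{3}SS.
by rewrite trmx_mul Ssym !mulmxA.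
Qed.

Lemma vnorm_msqrt_le P x : psd P -> psd (1%:M - P) ->
  vnorm (msqrt (1%:M - P) *m x) <= vnorm x.
Proof.
move=> [_ Ppsd] IP; rewrite vnorm_msqrt // vnormE ler_wsqrtr //.
have entryB (A B : 'M[R]_1) : (A - B) 0 0 = A 0 0 - B 0 0 by rewrite !mxE.
by rewrite /qform mulmxBr mulmxBl mulmx1 entryB lerBlDr lerDl Ppsd.
Qed.

Lemma vnorm_msqrt_lipschitz P u v : psd P -> psd (1%:M - P) ->
  vnorm (msqrt (1%:M - P) *m u) <= vnorm (msqrt (1%:M - P) *m v) + vnorm (u - v).
Proof.
move=> Ppsd IP; rewrite -{1}(subrK v u) mulmxDr addrC.
by apply: le_trans (vnormD _ _) _; rewrite lerD2l vnorm_msqrt_le.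
Qed.

Lemma vnorm_mulmx_Bstar S L (b : 'I_L -> 'cV[R]_d) x : Bstar b x ->
  vnorm (S *m x) <= \big[Num.max/0]_(l < L) vnorm (S *m b l).
Proof.
move=> [c [c1 ->]]; set B := \big[Num.max/0]_(l < L) _.
have B0 : 0 <= B := bigmax_ge_id _ _ _ _.
rewrite mulmx_sumr; apply: le_trans (vnorm_sum _) _.
apply: le_trans (_ : (\sum_l `|c l|) * B <= B); last by rewrite ler_piMl.
rewrite mulr_suml; apply: ler_sum => l _.
by rewrite -scalemxAr vnormZ ler_wpM2l // le_bigmax.
Qed.

End EuclideanNorm.

Section ConstraintSet.
Variables (R : realType) (d m : nat).
Implicit Types (P : 'M[R]_d).

Lemma Acal_psd P : Acal m P -> psd P /\ psd (1%:M - P).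
Proof. by move=> [_ [P0 [P1 _]]]; move: P0; rewrite /loewner_le subr0. Qed.

Lemma Acal0 : Acal m (0 : 'M[R]_d).
Proof.
have psd0 : psd (0 : 'M[R]_d).
  by split=> [|x]; rewrite ?trmx0 // /qform mulmx0 mul0mx mxE.
have psd1 : psd (1%:M : 'M[R]_d).
  by split=> [|x]; rewrite ?trmx1 // /qform mulmx1 mulmx_tr_self_ge0.
by split; [rewrite trmx0 | rewrite /loewner_le !subr0 mxtrace0 ler0n].
Qed.

Variables (L : nat) (b : 'I_L -> 'cV[R]_d).

Lemma Rstar_le P : Acal m P ->
  Rstar b m <= \big[Num.max/0]_(l < L) vnorm (msqrt (1%:M - P) *m b l).
Proof.
move=> AP; apply: ge_inf; last by exists P.
by exists 0 => _ [Q _ <-]; apply: bigmax_ge_id.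
Qed.

Lemma le_Rstar c :
  (forall P, Acal m P ->
     c <= \big[Num.max/0]_(l < L) vnorm (msqrt (1%:M - P) *m b l)) ->
  c <= Rstar b m.
Proof.
move=> cP; apply: lb_le_inf => [|_ [P AP <-]]; last exact: cP.
by eexists; exists 0; first exact: Acal0.
Qed.

Lemma sqrt_Rfun P : psd (1%:M - P) ->
  Num.sqrt (Rfun b P) = \big[Num.max/0]_(l < L) vnorm (msqrt (1%:M - P) *m b l).
Proof.
by move=> IP; rewrite sqrtr_bigmax; apply: eq_bigr => l _; rewrite vnorm_msqrt.
Qed.

End ConstraintSet.

Unset Implicit Arguments.
Local Open Scope classical_set_scope.

Theorem proposition4 (R : realType) (d L mstar : nat)
    (b bh : 'I_L -> 'cV[R]_d) (Pihat : 'M[R]_d) (m : nat) (eps : R) :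
  in_subspace_dim b mstar ->
  (1 <= m)%N -> 0 <= eps ->
  Acal m Pihat ->
  (forall P, Acal m P -> Rfun bh Pihat <= Rfun bh P) ->
  (forall l, vnorm (bh l - b l) <= eps) ->
  [/\ Num.sqrt (Rfun bh Pihat) <= Rstar b m + eps,
      (forall bbar, Bstar b bbar ->
         vnorm (msqrt (1%:M - Pihat) *m bbar) <= Rstar b m + 2 * eps)
    & ((m < mstar)%N -> Num.max (Rstar b m - eps) 0 <= Num.sqrt (Rfun bh Pihat))].
Proof.
move=> _ _ eps0 APi Pmin bh_b.
pose F (c : 'I_L -> 'cV[R]_d) (P : 'M[R]_d) :=
  \big[Num.max/0]_(l < L) vnorm (msqrt (1%:M - P) *m c l).
have F_close c c' P : Acal m P -> (forall l, vnorm (c l - c' l) <= eps) ->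
    F c P <= F c' P + eps.
  move=> /Acal_psd [Ppsd IP] cc'; apply: bigmax_le_add => // l.
  by apply: le_trans (vnorm_msqrt_lipschitz _ (c' l) Ppsd IP) _; rewrite lerD2l cc'.
have b_bh l : vnorm (b l - bh l) <= eps by rewrite vnormB bh_b.
have sqrt_Rfun_bh P : Acal m P -> Num.sqrt (Rfun bh P) = F bh P.
  by move=> /Acal_psd [_ IP]; apply: sqrt_Rfun.
have Fb_hat : F b Pihat <= Num.sqrt (Rfun bh Pihat) + eps.
  by rewrite sqrt_Rfun_bh // F_close.
have Rhat_le : Num.sqrt (Rfun bh Pihat) <= Rstar b m + eps.
  rewrite -lerBlDr; apply: le_Rstar => P AP; rewrite lerBlDr.
  by apply: le_trans (ler_wsqrtr (Pmin P AP)) _; rewrite sqrt_Rfun_bh // F_close.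
split=> // [x Bx | _].
  apply: le_trans (vnorm_mulmx_Bstar _ Bx) _; apply: le_trans Fb_hat _; lra.
rewrite ge_max sqrtr_ge0 andbT lerBlDr.
exact: le_trans (Rstar_le b APi) Fb_hat.
Qed.
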